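(* For every integer $n\ge 3$ there exist a boolean classifier $\kappa:\{0,1\}^n\to\{0,1\}$ and a point $\mathbf v\in\{0,1\}^n$ such that, for the explanation problem with sample $(\mathbf v,\kappa(\mathbf v))$, some feature $i\in\mathcal F=\{1,\dots,n\}$ is irrelevant and $\mathrm{Sv}(i)\neq 0$ (issue I1).
   Context: Let $\mathcal F=\{1,\dots,n\}$. A boolean classifier is a non-constant function $\kappa:\{0,1\}^n\to\{0,1\}$; a sample is a pair $(\mathbf v,c)$ with $\mathbf v\in\{0,1\}^n$ and $c=\kappa(\mathbf v)$. For $\mathcal S\subseteq\mathcal F$ let $\Upsilon(\mathcal S;\mathbf v)=\{\mathbf x\in\{0,1\}^n : x_j=v_j \text{ for all } j\in\mathcal S\}$ and, for any function $g$ on $\{0,1\}^n$, $\mathbf E[g\mid \mathbf x_{\mathcal S}=\mathbf v_{\mathcal S}]=|\Upsilon(\mathcal S;\mathbf v)|^{-1}\sum_{\mathbf x\in\Upsilon(\mathcal S;\mathbf v)}g(\mathbf x)$ (uniform distribution, independent features). The characteristic function is $\upsilon(\mathcal S)=\mathbf E[\kappa\mid\mathbf x_{\mathcal S}=\mathbf v_{\mathcal S}]$, and the SHAP score of feature $i$ is $\mathrm{Sv}(i)=\sum_{\mathcal S\subseteq\mathcal F\setminus\{i\}}\frac{|\mathcal S|!\,(n-|\mathcal S|-1)!}{n!}\big(\upsilon(\mathcal S\cup\{i\})-\upsilon(\mathcal S)\big)$. The similarity predicate is $\sigma(\mathbf x)=1$ if $\kappa(\mathbf x)=\kappa(\mathbf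 v)$ and $0$ otherwise. A set $\mathcal S\subseteq\mathcal F$ is a weak abductive explanation (WAXp) if $\mathbf E[\sigma\mid\mathbf x_{\mathcal S}=\mathbf v_{\mathcal S}]=1$ (i.e. $\kappa(\mathbf x)=\kappa(\mathbf v)$ for all $\mathbf x\in\Upsilon(\mathcal S;\mathbf v)$); an abductive explanation (AXp) is a WAXp $\mathcal S$ such that $\mathcal S\setminus\{t\}$ is not a WAXp for every $t\in\mathcal S$. A feature is relevant if it belongs to at least one AXp, and irrelevant otherwise. *)

(* Features F = {1..n} are represented by 'I_n (0-indexed),
   points of {0,1}^n by finite functions {ffun 'I_n -> bool},
   numeric values (expectations, SHAP scores) live in rat. *)
From mathcomp Require Import all_boot all_order all_algebra.
Set Implicit Arguments. Unset Strict Implicit. Unset Printing Implicit Defensive.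
Import Order.TTheory GRing.Theory Num.Theory.
Local Open Scope ring_scope.

Definition point (n : nat) := {ffun 'I_n -> bool}.

Definition non_constant n (kappa : point n -> bool) : Prop :=
  exists x y : point n, kappa x != kappa y.

Definition Upsilon n (S : {set 'I_n}) (v : point n) : {set point n} :=
  [set x : point n | [forall j in S, x j == v j]].

Definition cond_exp n (g : point n -> rat) (S : {set 'I_n}) (v : point n) : rat :=
  (#|Upsilon S v|%:R)^-1 * \sum_(x in Upsilon S v) g x.

Definition charfn n (kappa : point n -> bool) (v : point n) (S : {set 'I_n}) : rat :=
  cond_exp (fun x => (kappa x)%:R) S v.

Definition Sv n (kappa : point n -> bool) (v : point n) (i : 'I_n) : rat :=
  \sum_(S : {set 'I_n} | i \notin S)
     ((#|S|`! * (n - #|S| - 1)`!)%:R / (n`!)%:R) *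
     (charfn kappa v (i |: S) - charfn kappa v S).

Definition sigma n (kappa : point n -> bool) (v : point n) (x : point n) : rat :=
  (kappa x == kappa v)%:R.

Definition WAXp n (kappa : point n -> bool) (v : point n) (S : {set 'I_n}) : Prop :=
  cond_exp (sigma kappa v) S v = 1.

Definition AXp n (kappa : point n -> bool) (v : point n) (S : {set 'I_n}) : Prop :=
  WAXp kappa v S /\ (forall t, t \in S -> ~ WAXp kappa v (S :\ t)).

Definition relevant n (kappa : point n -> bool) (v : point n) (i : 'I_n) : Prop :=
  exists S : {set 'I_n}, AXp kappa v S /\ i \in S.

Definition irrelevant n (kappa : point n -> bool) (v : point n) (i : 'I_n) : Prop :=
  ~ relevant kappa v i.

From mathcomp Require Import all_boot all_order all_algebra.
Set Implicit Arguments.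
Unset Strict Implicit.
Unset Printing Implicit Defensive.
Import Order.TTheory GRing.Theory Num.Theory.
Local Open Scope ring_scope.

(* Take kappa(x) = x_1 /\ x_2 and v with v_1 = 1, v_2 = 0, so kappa(v) = 0.  Since
   kappa(x) = 1 forces x_1 = v_1, a point of Upsilon(S \ {1}; v) with
   kappa = 1 already lies in Upsilon(S; v): feature 1 can be dropped from any
   WAXp, hence lies in no AXp.  For the same reason fixing x_1 = v_1 keeps
   every point with kappa = 1 while discarding others, so every marginal
   contribution of feature 1 is nonnegative, and the one for S = {} is
   positive because kappa is not constant.  Hence Sv(1) > 0. *)

Lemma Upsilon_self n (S : {set 'I_n}) (v : point n) : v \in Upsilon S v.
Proof. by rewrite inE; apply/forall_inP. Qed.

Lemma card_Upsilon_gt0 n (S : {set 'I_n}) (v : point n) : (0 < #|Upsilon S v|)%N.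
Proof. by apply/card_gt0P; exists v; apply: Upsilon_self. Qed.

Lemma UpsilonS n (S T : {set 'I_n}) (v : point n) :
  S \subset T -> Upsilon T v \subset Upsilon S v.
Proof.
move=> /subsetP sST; apply/subsetP => x; rewrite !inE => /forall_inP xT.
by apply/forall_inP => j /sST; apply: xT.
Qed.

Lemma Upsilon_setU1 n (S : {set 'I_n}) (v : point n) (i : 'I_n) (x : point n) :
  (x \in Upsilon (i |: S) v) = (x i == v i) && (x \in Upsilon S v).
Proof.
apply/idP/andP => [xU | [xvi xS]].
  split; last exact: (subsetP (UpsilonS v (subsetUr [set i] S))).
  by move: xU; rewrite inE => /forall_inP; apply; rewrite !inE eqxx.
rewrite inE; apply/forall_inP => j; rewrite !inE => /predU1P[-> // | jS].
by move: xS; rewrite inE => /forall_inP; apply.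
Qed.

Lemma Upsilon_setU1_proper n (S : {set 'I_n}) (v : point n) (i : 'I_n) :
  i \notin S -> Upsilon (i |: S) v \proper Upsilon S v.
Proof.
move=> iS; rewrite properE UpsilonS ?subsetUr //=.
apply/subsetPn; exists [ffun j => if j == i then ~~ v i else v j].
  rewrite inE; apply/forall_inP => j jS; rewrite ffunE.
  by have /negPf-> : j != i by apply: contraNneq iS => <-.
by rewrite Upsilon_setU1 ffunE eqxx; case: (v i).
Qed.

Lemma cond_exp_bool n (b : point n -> bool) (S : {set 'I_n}) (v : point n) :
  cond_exp (fun x => (b x)%:R) S v =
  #|[set x in Upsilon S v | b x]|%:R / #|Upsilon S v|%:R.
Proof.
rewrite /cond_exp mulrC; congr (_ * _).
rewrite -sum1_card natr_sum big_mkcond [RHS]big_mkcond /=.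
by apply: eq_bigr => x _; rewrite [in RHS]inE; case: (x \in _); case: (b x).
Qed.

Lemma WAXpP n (kappa : point n -> bool) (v : point n) (S : {set 'I_n}) :
  WAXp kappa v S <-> {in Upsilon S v, forall x, kappa x = kappa v}.
Proof.
rewrite /WAXp /sigma cond_exp_bool.
have U_neq0 : #|Upsilon S v|%:R != 0 :> rat by rewrite pnatr_eq0 -lt0n card_Upsilon_gt0.
split => [/divr1_eq/eqP | kappa_const].
  rewrite eqr_nat => /eqP card_eq x xU.
  have /eqP full : [set x in Upsilon S v | kappa x == kappa v] == Upsilon S v.
    by rewrite eqEcard card_eq leqnn andbT; apply/subsetP => y; rewrite inE => /andP[].
  by move: xU; rewrite -full inE => /andP[_ /eqP].
have -> : [set x in Upsilon S v | kappa x == kappa v] = Upsilon S v.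
  by apply/setP => x; rewrite inE; case xU: (x \in _); rewrite //= kappa_const ?eqxx.
exact: divff.
Qed.

Lemma Sv_gt0 n (kappa : point n -> bool) (v : point n) (i : 'I_n) :
  (forall S : {set 'I_n}, i \notin S -> 0 <= charfn kappa v (i |: S) - charfn kappa v S) ->
  0 < charfn kappa v [set i] - charfn kappa v set0 ->
  0 < Sv kappa v i.
Proof.
move=> contrib_ge0 contrib0_gt0.
rewrite /Sv (bigD1 set0) ?in_set0 //= cards0 setU0.
apply: ltr_wpDr.
  by apply: sumr_ge0 => S /andP[iS _]; rewrite mulr_ge0 ?divr_ge0 ?contrib_ge0.
by rewrite mulr_gt0 // divr_gt0 // ltr0n ?muln_gt0 !fact_gt0.
Qed.

Section FeatureNecessaryForPositive.

Variables (n : nat) (kappa : point n -> bool) (v : point n) (i : 'I_n).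
Hypothesis kappa_le_feature : forall x, kappa x -> x i.
Hypothesis v_feature : v i.
Hypothesis kappa_v : kappa v = false.

Lemma WAXp_setD1 S : WAXp kappa v S -> WAXp kappa v (S :\ i).
Proof.
move=> /WAXpP kappaS; apply/WAXpP => x xU; rewrite kappa_v; apply/negbTE/negP => kx.
have xS : x \in Upsilon S v.
  have sub : S \subset i |: (S :\ i).
    by apply/subsetP => j jS; rewrite !inE jS andbT orbN.
  apply: (subsetP (UpsilonS v sub)).
  by rewrite Upsilon_setU1 xU (kappa_le_feature kx) v_feature.
by move: (kappaS x xS); rewrite kx kappa_v.
Qed.

Lemma irrelevant_feature : irrelevant kappa v i.
Proof. by move=> [S [[/WAXp_setD1 WAXpSi minS] iS]]; apply: (minS i iS). Qed.

Lemma positive_points_setU1 S :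
  [set x in Upsilon (i |: S) v | kappa x] = [set x in Upsilon S v | kappa x].
Proof.
apply/setP => x; rewrite ![x \in [set _ in _ | _]]inE Upsilon_setU1 v_feature.
by case kx: (kappa x); rewrite ?andbF // (kappa_le_feature kx).
Qed.

Lemma charfn_setU1E S :
  charfn kappa v (i |: S) =
  #|[set x in Upsilon S v | kappa x]|%:R / #|Upsilon (i |: S) v|%:R.
Proof. by rewrite /charfn cond_exp_bool positive_points_setU1. Qed.

Lemma charfn_contrib_ge0 S : 0 <= charfn kappa v (i |: S) - charfn kappa v S.
Proof.
rewrite charfn_setU1E /charfn cond_exp_bool subr_ge0 ler_wpM2l //.
rewrite lef_pV2 ?posrE ?ltr0n ?card_Upsilon_gt0 // ler_nat.
by rewrite subset_leq_card // UpsilonS // subsetUr.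
Qed.

Lemma charfn_contrib0_gt0 :
  non_constant kappa -> 0 < charfn kappa v [set i] - charfn kappa v set0.
Proof.
move=> [x [y kxy]].
have pos_gt0 : (0 < #|[set x in Upsilon set0 v | kappa x]|)%N.
  apply/card_gt0P; exists (if kappa x then x else y).
  rewrite inE; apply/andP; split; first by rewrite inE; apply/forall_inP => j; rewrite inE.
  by case kx: (kappa x) kxy => /=; [rewrite kx | case: (kappa y)].
rewrite -[[set i]]setU0 charfn_setU1E /charfn cond_exp_bool subr_gt0 ltr_pM2l ?ltr0n //.
rewrite ltf_pV2 ?posrE ?ltr0n ?card_Upsilon_gt0 // ltr_nat.
by rewrite proper_card // Upsilon_setU1_proper ?in_set0.
Qed.

End FeatureNecessaryForPositive.

Local Close Scope ring_scope.

Theorem proposition1 : forall n : nat, 3 <= n ->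
  exists (kappa : point n -> bool) (v : point n),
    non_constant kappa /\
    exists i : 'I_n, irrelevant kappa v i /\ Sv kappa v i <> 0%R.
Proof.
move=> n n_ge3.
pose i0 : 'I_n := Ordinal (leq_trans (isT : 0 < 3)%N n_ge3).
pose i1 : 'I_n := Ordinal (leq_trans (isT : 1 < 3)%N n_ge3).
pose kappa (x : point n) := x i0 && x i1.
pose v : point n := [ffun j => j != i1].
have kappa_le_i0 x : kappa x -> x i0 by case/andP.
have v_i0 : v i0 by rewrite ffunE.
have kappa_v : kappa v = false by rewrite /kappa !ffunE eqxx andbF.
have kappa_nc : non_constant kappa.
  by exists v, [ffun=> true]; rewrite kappa_v /kappa !ffunE.
exists kappa, v; split => //; exists i0; split.
  exact: (irrelevant_feature kappa_le_i0 v_i0 kappa_v).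
apply/eqP; rewrite gt_eqF //; apply: Sv_gt0 => [S _|].
  exact: (charfn_contrib_ge0 (v := v) kappa_le_i0 v_i0).
exact: (charfn_contrib0_gt0 (v := v) kappa_le_i0 v_i0 kappa_nc).
Qed.
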